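(* Assume (A1), (A2), (A3) and that $\{x^k\}_{k\in\mathbb N}$ is bounded. Then there exist $c_0>0$ and $k'\in\mathbb N$ such that for all $k\ge k'$, $$\operatorname{dist}(0,\partial_L\Phi(z^{k+1}))\le c_0\sum_{h=k-\tau-K}^{k}\|x^{h+1}-x^h\|\quad\text{and}\quad\operatorname{dist}(0,\partial_L\Psi(x^{k+1}))\le c_0\sum_{h=k-\tau-K}^{k}\|x^{h+1}-x^h\|,$$ where $x^i:=x^0$ for $i<0$.
   Context: Let $\mathcal H=\mathcal H_1\times\cdots\times\mathcal H_m$ be a product of finite-dimensional real Euclidean spaces with $\langle x,y\rangle=\sum_j\langle x_j,y_j\rangle$. For $x\in\mathcal H$, $x_{-j}$ denotes $x$ with its $j$th block removed and $(x_{-j};y)$ the point with $j$th block replaced by $y\in\mathcal H_j$. Let $f:\mathcal H\to\mathbb R$ be $C^1$, $r_j:\mathcal H_j\to(-\infty,\infty]$ proper lower semicontinuous, $r(x)=\sum_jr_j(x_j)$, $\Psi=f+r$ bounded below. $r$ is prox-bounded: there is $\lambda_r>0$ with $\operatorname{argmin}_y\{r(y)+\frac1{2\lambda}\|x-y\|^2\}\ne\emptyset$ for all $x$ and $0<\lambda\le\lambda_r$. For each $j$ there is $L_j:\mathcal H_{-j}\to(0,\infty)$ such that $y\mapsto\nabla_jf(x_{-j};y)$ is $L_j(x_{-j})$-Lipschitz for every $x$; $\nabla f$ is Lipschitz on every bounded set. $\partial_L$ is the limiting subdifferential and $\operatorname{dist}(0,S)=\inf_{s\in S}\|s\|$. Delays: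 an integer $\tau\ge1$ and $d_k\in\{0,\dots,\tau\}^m$; $x^{k-d_k}:=(x_1^{k-d_{k,1}},\dots,x_m^{k-d_{k,m}})$, with $x^i_j=x^0_j$ for $i\le0$. Deterministic Asynchronous PALM: choose $x^0$, $c\in(0,1)$, $M>0$, indices $j_k\in\{1,\dots,m\}$; let $\rho_\tau:=\sup_{j,k}|\{h:k-\tau\le h\le k,\ j_h=j\}|$. For each $k$ set $\gamma^k_j=\min\{c(L_j(x^{k-d_k}_{-j})+2M\sqrt{\rho_\tau\tau})^{-1},\lambda_r\}$, choose $x^{k+1}_{j_k}\in\operatorname{argmin}_{u\in\mathcal H_{j_k}}\{r_{j_k}(u)+\langle\nabla_{j_k}f(x^{k-d_k}),u-x^k_{j_k}\rangle+\frac1{2\gamma^k_{j_k}}\|u-x^k_{j_k}\|^2\}$, and $x^{k+1}_j=x^k_j$ for $j\ne j_k$. (A1): there is $K\in\mathbb N$ with $\{1,\dots,m\}\subseteq\{j_{k+1},\dots,j_{k+K}\}$ for all $k$. (A2): there is $L>0$ with $L_j(x^{k-d_k}_{-j})\le L$ for all $j,k$. (A3): $\|\nabla_{j_k}f(x^k)-\nabla_{j_k}f(x^{k-d_k})\|\le M\|x^k-x^{k-d_k}\|$ for all $k$. Lyapunov function $\Phi:\mathcal H^{1+\tau}\to(-\infty,\infty]$: $\Phi(x(0),\dots,x(\tau))=f(x(0))+r(x(0))+\frac{M\sqrt{\rho_\tau}}{2\sqrt\tau}\sum_{h=1}^\tau(\tau-h+1)\|x(h)-x(h-1)\|^2$,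 and $z^k:=(x^k,x^{k-1},\dots,x^{k-\tau})$ with $x^i:=x^0$ for $i<0$. *)

From Stdlib Require Import Reals.
From mathcomp Require Import ssreflect ssrfun ssrbool eqtype ssrnat seq choice fintype.
Set Implicit Arguments. Unset Strict Implicit. Unset Printing Implicit Defensive.
Local Open Scope R_scope.

Definition vec (T : finType) := T -> R.
Definition rsum (T : finType) (g : T -> R) : R := foldr Rplus 0 (map g (enum T)).
Definition inner (T : finType) (u v : vec T) : R := rsum (fun i => u i * v i).
Definition vnorm (T : finType) (u : vec T) : R := sqrt (inner u u).
Definition vsub (T : finType) (u v : vec T) : vec T := fun i => u i - v i.

(** Extended reals (-oo, +oo] : None stands for +oo. *)
Definition ER := option R.
Definition ER_le (a b : ER) : Prop :=
  match a, b with
  | _, None => True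
  | None, Some _ => False
  | Some x, Some y => x <= y
  end.
Definition ER_lt (a b : ER) : Prop :=
  match a, b with
  | None, _ => False
  | Some _, None => True
  | Some x, Some y => x < y
  end.
Definition ER_add (a b : ER) : ER :=
  match a, b with Some x, Some y => Some (x + y) | _, _ => None end.
Definition ER_addR (a : ER) (c : R) : ER :=
  match a with Some x => Some (x + c) | None => None end.

Definition proper_fun (T : finType) (g : vec T -> ER) : Prop := exists x, g x <> None.
Definition lsc (T : finType) (g : vec T -> ER) : Prop :=
  forall (x : vec T) (a : R), ER_lt (Some a) (g x) ->
    exists delta, 0 < delta /\ forall y, vnorm (vsub y x) < delta -> ER_lt (Some a) (g y).
Definition is_argmin (T : finType) (g : vec T -> ER) (y : vec T) : Prop :=
  forall u, ER_le (g y) (g u).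

Definition is_C1 (T : finType) (f : vec T -> R) (grad : vec T -> vec T) : Prop :=
  (forall x eps, 0 < eps -> exists delta, 0 < delta /\ forall y,
      vnorm (vsub y x) < delta ->
      Rabs (f y - f x - inner (grad x) (vsub y x)) <= eps * vnorm (vsub y x)) /\
  (forall x eps, 0 < eps -> exists delta, 0 < delta /\ forall y,
      vnorm (vsub y x) < delta -> vnorm (vsub (grad y) (grad x)) < eps).

Definition lip_on_bounded (T : finType) (F : vec T -> vec T) : Prop :=
  forall B, exists Lb, forall x y, vnorm x <= B -> vnorm y <= B ->
    vnorm (vsub (F x) (F y)) <= Lb * vnorm (vsub x y).

Definition prox_bounded (T : finType) (g : vec T -> ER) (lam : R) : Prop :=
  forall (x : vec T) (l : R), 0 < l <= lam ->
    exists y, is_argmin (fun y => ER_addR (g y) (/ (2 * l) * (vnorm (vsub x y)) ^ 2)) y.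

Definition frechet_sub (T : finType) (g : vec T -> ER) (x v : vec T) : Prop :=
  g x <> None /\
  forall eps, 0 < eps -> exists delta, 0 < delta /\ forall y,
    vnorm (vsub y x) < delta ->
    ER_le (ER_addR (g x) (inner v (vsub y x) - eps * vnorm (vsub y x))) (g y).

Definition vconv (T : finType) (u : nat -> vec T) (x : vec T) : Prop :=
  forall eps, 0 < eps -> exists N, forall n, (N <= n)%N -> vnorm (vsub (u n) x) < eps.

Definition limiting_sub (T : finType) (g : vec T -> ER) (x v : vec T) : Prop :=
  exists (xs vs : nat -> vec T),
    vconv xs x /\ vconv vs v /\ (forall n, frechet_sub g (xs n) (vs n)) /\
    exists gx, g x = Some gx /\
      forall eps, 0 < eps -> exists N, forall n, (N <= n)%N ->
        exists a, g (xs n) = Some a /\ Rabs (a - gx) < eps.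

(** dist(0, S) <= b, i.e. inf_{s in S} ||s|| <= b (inf of the empty set = +oo). *)
Definition dist0_le (T : finType) (S : vec T -> Prop) (b : R) : Prop :=
  forall eps, 0 < eps -> exists v, S v /\ vnorm v < b + eps.

(** Block structure: H = R^I, H_j = R^{i | blk i = j}, H_{-j} = R^{i | blk i <> j}. *)
Section Blocks.
Local Unset Implicit Arguments.
Variables (m : nat) (I : finType) (blk : I -> 'I_m).

Definition blockT (j : 'I_m) : finType := {i : I | blk i == j}.
Definition cblockT (j : 'I_m) : finType := {i : I | blk i != j}.

Definition blk_of (x : vec I) (j : 'I_m) : vec (blockT j) := fun s => x (val s).
Definition blk_rest (x : vec I) (j : 'I_m) : vec (cblockT j) := fun s => x (val s).
Definition blk_repl (x : vec I) (j : 'I_m) (y : vec (blockT j)) : vec I :=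
  fun i => match (insub i : option (blockT j)) with Some s => y s | None => x i end.

Definition rfull (r : forall j : 'I_m, vec (blockT j) -> ER) (x : vec I) : ER :=
  foldr ER_add (Some 0) (map (fun j => r j (blk_of x j)) (enum 'I_m)).

Definition Psi (f : vec I -> R) (r : forall j : 'I_m, vec (blockT j) -> ER) (x : vec I) : ER :=
  ER_addR (rfull r x) (f x).

Definition block_lipschitz (grad : vec I -> vec I)
    (L : forall j : 'I_m, vec (cblockT j) -> R) : Prop :=
  forall (j : 'I_m) (x : vec I) (y y' : vec (blockT j)),
    vnorm (vsub (blk_of (grad (blk_repl x j y)) j) (blk_of (grad (blk_repl x j y')) j))
      <= L j (blk_rest x j) * vnorm (vsub y y').

(* x^{k - d_k}, with x^i = x^0 for i <= 0 (truncated nat subtraction) *)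
Definition xdel (X : nat -> vec I) (d : nat -> 'I_m -> nat) (k : nat) : vec I :=
  fun i => X (k - d k (blk i))%N i.

Definition cnt (jseq : nat -> 'I_m) (tau : nat) (j : 'I_m) (k : nat) : nat :=
  count (fun h => jseq h == j) (iota (k - tau) (k - (k - tau)).+1).

(* rho = sup_{j,k} cnt j k (a maximum, as the counts are bounded naturals) *)
Definition is_rho (jseq : nat -> 'I_m) (tau rho : nat) : Prop :=
  (forall j k, (cnt jseq tau j k <= rho)%N) /\ (exists j k, cnt jseq tau j k = rho).

Definition gamma (L : forall j : 'I_m, vec (cblockT j) -> R) (X : nat -> vec I)
    (d : nat -> 'I_m -> nat) (c M lam_r : R) (rho tau : nat) (k : nat) (j : 'I_m) : R :=
  Rmin (c / (L j (blk_rest (xdel X d k) j) + 2 * M * sqrt (INR rho * INR tau))) lam_r.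

Definition palm_step (f : vec I -> R) (grad : vec I -> vec I)
    (r : forall j : 'I_m, vec (blockT j) -> ER)
    (L : forall j : 'I_m, vec (cblockT j) -> R) (X : nat -> vec I)
    (d : nat -> 'I_m -> nat) (jseq : nat -> 'I_m) (c M lam_r : R) (rho tau : nat)
    (k : nat) : Prop :=
  let j := jseq k in
  let g := gamma L X d c M lam_r rho tau k j in
  is_argmin (fun u => ER_addR (r j u)
                (inner (blk_of (grad (xdel X d k)) j) (vsub u (blk_of (X k) j))
                 + / (2 * g) * (vnorm (vsub u (blk_of (X k) j))) ^ 2))
            (blk_of (X k.+1) j) /\
  (forall i, blk i != j -> X k.+1 i = X k i).

Definition assumption_A1 (jseq : nat -> 'I_m) (K : nat) : Prop :=
  forall (k : nat) (j : 'I_m), exists t, (1 <= t <= K)%N /\ jseq (k + t)%N = j.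

(* the Lyapunov function Phi on H^{1+tau} = R^('I_(tau+1) * I) *)
Definition zsl (tau : nat) (z : vec (('I_tau.+1 * I)%type)) (h : nat) : vec I :=
  fun i => z (inord h, i).

Definition Phi (f : vec I -> R) (r : forall j : 'I_m, vec (blockT j) -> ER)
    (M : R) (rho tau : nat) (z : vec (('I_tau.+1 * I)%type)) : ER :=
  ER_addR (rfull r (zsl tau z 0))
    (f (zsl tau z 0) +
     M * sqrt (INR rho) / (2 * sqrt (INR tau)) *
     foldr Rplus 0
       (map (fun h => INR (tau - h + 1) * (vnorm (vsub (zsl tau z h) (zsl tau z h.-1))) ^ 2)
            (iota 1 tau))).

(* z^k = (x^k, x^{k-1}, ..., x^{k-tau}), x^i = x^0 for i < 0 *)
Definition zk (X : nat -> vec I) (tau k : nat) : vec (('I_tau.+1 * I)%type) :=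
  fun p => X (k - p.1)%N p.2.

(* sum_{h = k - tau - K}^{k} ||x^{h+1} - x^h||; terms with h < 0 vanish *)
Definition Ssum (X : nat -> vec I) (tau K k : nat) : R :=
  foldr Rplus 0
    (map (fun h => vnorm (vsub (X h.+1) (X h)))
         (iota (k - tau - K) (k - (k - tau - K)).+1)).

End Blocks.

(* After K iterations every block j has been refreshed at some time h in the window
   (k-K, k], and x^{k+1} agrees on block j with the outcome of that refresh.  The optimality
   of the proximal step bounds r_j below at x^{k+1}_j by an affine function minus a quadratic,
   so that
     grad f(x^{k+1}) - grad f(x^{h-d_h}) - (x^{h+1} - x^h) / gamma^h      (blockwise)
   is a Frechet, hence limiting, subgradient of Psi at x^{k+1}.  Every point involved is made of
   coordinates of iterates, so the Lipschitz bound of grad f on a ball, the lower bound on the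
   step sizes coming from (A2), and telescoping bound this vector by the step lengths in the
   window.  For Phi one adds the gradient of its convex quadratic tail, controlled the same way. *)

From HB Require Import structures.
From Stdlib Require Import Reals Lra Lia FunctionalExtensionality.
From mathcomp Require Import ssreflect ssrfun ssrbool eqtype ssrnat seq choice fintype bigop.
From mathcomp Require Import zify.
Local Open Scope R_scope.
Set Implicit Arguments.

(** * Finite sums and norms *)

HB.instance Definition _ :=
  Monoid.isComLaw.Build R 0 Rplus (fun x y z => esym (Rplus_assoc x y z)) Rplus_comm Rplus_0_l.
HB.instance Definition _ :=
  Monoid.isMulLaw.Build R 0 Rmult Rmult_0_l Rmult_0_r.
HB.instance Definition _ :=
  Monoid.isAddLaw.Build R Rmult Rplus Rmult_plus_distr_r Rmult_plus_distr_l.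

Section BigR.
Variables (J : Type) (s : seq J) (P : pred J).

Lemma bigR_le (F G : J -> R) : (forall i, P i -> F i <= G i) ->
  \big[Rplus/0]_(i <- s | P i) F i <= \big[Rplus/0]_(i <- s | P i) G i.
Proof. by move=> H; apply: big_ind2 => *; [lra | apply: Rplus_le_compat | apply: H]. Qed.

Lemma bigRB (F G : J -> R) :
  \big[Rplus/0]_(i <- s | P i) (F i - G i) =
  \big[Rplus/0]_(i <- s | P i) F i - \big[Rplus/0]_(i <- s | P i) G i.
Proof.
rewrite (eq_bigr (fun i => F i + (-1) * G i)) => [|i _]; last by ring.
by rewrite big_split -big_distrr /=; ring.
Qed.

Lemma bigR_ge0 (F : J -> R) : (forall i, P i -> 0 <= F i) ->
  0 <= \big[Rplus/0]_(i <- s | P i) F i.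
Proof. by move=> H; apply: big_ind => *; [lra | apply: Rplus_le_le_0_compat | apply: H]. Qed.

Lemma Rabs_bigR_le (F : J -> R) :
  Rabs (\big[Rplus/0]_(i <- s | P i) F i) <= \big[Rplus/0]_(i <- s | P i) Rabs (F i).
Proof.
apply: (big_ind2 (fun x y => Rabs x <= y)) => [|a b c e hab hce|i _].
- by rewrite Rabs_R0; lra.
- by apply: Rle_trans (Rabs_triang a c) _; lra.
- exact: Rle_refl.
Qed.
End BigR.

Lemma bigR_le_size (J : eqType) (s : seq J) (F : J -> R) (C : R) :
  (forall h, h \in s -> F h <= C) -> \big[Rplus/0]_(h <- s) F h <= INR (size s) * C.
Proof.
elim: s => [|a s IH] H; first by rewrite big_nil /=; lra.
rewrite big_cons /= -/(INR (S (size s))) S_INR.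
have := H a (mem_head _ _); have := IH (fun h hs => H h (mem_behead (s := a :: s) hs)); lra.
Qed.

Lemma foldr_Rplus_map (J : Type) (F : J -> R) (s : seq J) :
  foldr Rplus 0 (map F s) = \big[Rplus/0]_(x <- s) F x.
Proof. by elim: s => [|a s IH] /=; [rewrite big_nil | rewrite big_cons IH]. Qed.

Section Rsum.
Variable T : finType.
Implicit Types (F G : T -> R) (u v w : vec T).

Lemma rsumE F : rsum F = \big[Rplus/0]_(i : T) F i.
Proof. by rewrite /rsum foldr_Rplus_map big_enum. Qed.

Lemma eq_rsum F G : (forall i, F i = G i) -> rsum F = rsum G.
Proof. by move=> H; rewrite /rsum (eq_map H). Qed.

Lemma rsumD F G : rsum (fun i => F i + G i) = rsum F + rsum G.
Proof. by rewrite !rsumE big_split. Qed.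

Lemma rsumZ a F : rsum (fun i => a * F i) = a * rsum F.
Proof. by rewrite !rsumE big_distrr. Qed.

Lemma rsumB F G : rsum (fun i => F i - G i) = rsum F - rsum G.
Proof.
rewrite (@eq_rsum _ (fun i => F i + (-1) * G i)); last by move=> i; ring.
by rewrite rsumD rsumZ; ring.
Qed.

Lemma rsum_le F G : (forall i, F i <= G i) -> rsum F <= rsum G.
Proof. by move=> H; rewrite !rsumE; apply: bigR_le. Qed.

Lemma rsum_ge0 F : (forall i, 0 <= F i) -> 0 <= rsum F.
Proof. by move=> H; rewrite rsumE; apply: bigR_ge0. Qed.

Lemma rsum_const a : rsum (fun _ : T => a) = INR #|T| * a.
Proof.
rewrite /rsum cardE; elim: (enum T) => [|x t IH] /=; first by ring.
by rewrite IH; case: (size t) => [|n] /=; ring.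
Qed.

Lemma inner_ge0 u : 0 <= inner u u.
Proof. by apply: rsum_ge0 => i; apply: Rle_0_sqr. Qed.

Lemma innerDl u v w : inner (fun i => u i + v i) w = inner u w + inner v w.
Proof. by rewrite /inner -rsumD; apply: eq_rsum => i; ring. Qed.

Lemma vnorm_ge0 u : 0 <= vnorm u.
Proof. exact: sqrt_pos. Qed.

Lemma vnorm_sqr u : vnorm u ^ 2 = inner u u.
Proof. by rewrite pow2_sqrt //; apply: inner_ge0. Qed.

Lemma vnorm_vsub_diag u : vnorm (vsub u u) = 0.
Proof.
rewrite /vnorm /inner (@eq_rsum _ (fun _ => 0)) ?rsum_const ?Rmult_0_r ?sqrt_0 //.
by move=> i; rewrite /vsub Rminus_diag_eq //; ring.
Qed.

Lemma Rabs_coord_le_vnorm u i : Rabs (u i) <= vnorm u.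
Proof.
rewrite /vnorm -sqrt_Rsqr_abs; apply: sqrt_le_1_alt.
rewrite /inner rsumE (bigD1 i) //=.
have := @bigR_ge0 _ (index_enum T) (fun j => j != i) (fun j => u j * u j) (fun j _ => Rle_0_sqr _).
rewrite /Rsqr; lra.
Qed.

Lemma vnorm_le_l1 u : vnorm u <= rsum (fun i => Rabs (u i)).
Proof.
have H0 : 0 <= rsum (fun i => Rabs (u i)) by apply: rsum_ge0 => i; apply: Rabs_pos.
rewrite /vnorm -(sqrt_Rsqr _ H0); apply: sqrt_le_1_alt.
rewrite /inner !rsumE /Rsqr.
elim: (index_enum T) => [|x t IH]; first by rewrite !big_nil; lra.
rewrite !big_cons.
have := @bigR_ge0 _ t xpredT (fun i => Rabs (u i)) (fun i _ => Rabs_pos _).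
have := Rabs_pos (u x); have := Rsqr_abs (u x); rewrite /Rsqr => ->; nra.
Qed.

Lemma vnorm_le_card u C : (forall i, Rabs (u i) <= C) -> vnorm u <= INR #|T| * C.
Proof.
move=> H; apply: Rle_trans (vnorm_le_l1 u) _.
by rewrite -rsum_const; apply: rsum_le.
Qed.
End Rsum.

(** * Subdifferential calculus *)

Lemma ER_le_Some_trans (a a' : R) (v : ER) : a' <= a -> ER_le (Some a) v -> ER_le (Some a') v.
Proof. by case: v => //= b; lra. Qed.

Lemma dist0_le_of (T : finType) (S : vec T -> Prop) (v : vec T) (b : R) :
  S v -> vnorm v <= b -> dist0_le S b.
Proof. by move=> Sv hb eps he; exists v; split => //; lra. Qed.

Lemma frechet_limiting (T : finType) (g : vec T -> ER) (x v : vec T) :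
  frechet_sub g x v -> limiting_sub g x v.
Proof.
move=> Hg; exists (fun _ => x), (fun _ => v).
have Hc (u : vec T) : vconv (fun _ => u) u.
  by move=> eps he; exists 0%N => n _; rewrite vnorm_vsub_diag.
do 3!split => //.
case: Hg; case: (g x) => [gx|] // _ _; exists gx; split => // eps he.
by exists 0%N => n _; exists gx; rewrite Rminus_diag_eq // Rabs_R0.
Qed.

Lemma frechet_of_quadratic_minorant (T : finType) (g : vec T -> ER) (x s : vec T) (gx C : R) :
  0 <= C -> g x = Some gx ->
  (forall y, ER_le (Some (gx + inner s (vsub y x) - C * inner (vsub y x) (vsub y x))) (g y)) ->
  frechet_sub g x s.
Proof.
move=> hC Hx Hy; split; first by rewrite Hx.
move=> eps heps; exists (eps / (C + 1)); split => [|y hy].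
  by apply: Rdiv_lt_0_compat; lra.
have hlt : vnorm (vsub y x) * (C + 1) < eps.
  have := Rmult_lt_compat_r (C + 1) _ _ ltac:(lra) hy.
  by rewrite /Rdiv Rmult_assoc Rinv_l; lra.
rewrite Hx /=; apply: ER_le_Some_trans (Hy y); rewrite -vnorm_sqr.
have := vnorm_ge0 (vsub y x).
nra.
Qed.

Lemma frechet_add_C1 (T : finType) (g : vec T -> ER) (F : vec T -> R) (gF : vec T -> vec T)
    (x s : vec T) :
  is_C1 F gF -> frechet_sub g x s ->
  frechet_sub (fun y => ER_addR (g y) (F y)) x (fun i => gF x i + s i).
Proof.
move=> [HF _] [Hx Hg]; split; first by move: Hx; case: (g x).
move=> eps heps.
have [d1 [hd1 Hd1]] := HF x (eps / 2) ltac:(lra).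
have [d2 [hd2 Hd2]] := Hg (eps / 2) ltac:(lra).
exists (Rmin d1 d2); split => [|y hy]; first exact: Rmin_pos.
have := Hd1 y (Rlt_le_trans _ _ _ hy (Rmin_l _ _)).
have := Hd2 y (Rlt_le_trans _ _ _ hy (Rmin_r _ _)).
rewrite innerDl; case: (g x) => [gx|] //=; case: (g y) => [gy|] //= h1 h2.
have := Rle_abs (F y - F x - inner (gF x) (vsub y x)).
have := Rle_abs (- (F y - F x - inner (gF x) (vsub y x))); rewrite Rabs_Ropp; lra.
Qed.

Lemma frechet_add_affine_minorant (T : finType) (g : vec T -> ER) (h : vec T -> R) (x v w : vec T) :
  frechet_sub g x v -> (forall y, h x + inner w (vsub y x) <= h y) ->
  frechet_sub (fun y => ER_addR (g y) (h y)) x (fun i => v i + w i).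
Proof.
move=> [Hx Hg] Hh; split; first by move: Hx; case: (g x).
move=> eps heps; have [dl [hdl Hdl]] := Hg eps heps; exists dl; split => // y hy.
have := Hdl y hy; have := Hh y; rewrite innerDl.
by case: (g x) => [gx|] //=; case: (g y) => [gy|] //=; lra.
Qed.

Definition delta_slot (n : nat) (p : 'I_n.+1) (h : nat) : R := if nat_of_ord p == h then 1 else 0.

Lemma rsum_delta_slot (n : nat) (T : finType) (h : nat) (F : 'I_n.+1 * T -> R) :
  (h <= n)%N -> rsum (fun p => delta_slot p.1 h * F p) = rsum (fun i => F (inord h, i)).
Proof.
move=> hn; rewrite !rsumE (eq_bigr (fun p => delta_slot p.1 h * F (p.1, p.2))); last by case.
rewrite -(pair_bigA _ (fun a b => delta_slot a h * F (a, b))) /=.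
rewrite (bigD1 (inord h)) //= /delta_slot inordK // eqxx.
rewrite [X in _ + X]big1 ?Rplus_0_r => [|p hp]; first by apply: eq_bigr => i _; rewrite Rmult_1_l.
apply: big1 => i _; case: eqP => [E|]; last by rewrite Rmult_0_l.
by move/eqP: hp; case; apply: val_inj; rewrite /= E inordK.
Qed.

Lemma frechet_slice0 (I : finType) (n : nat) (g : vec I -> ER) (z : vec ('I_n.+1 * I)%type)
    (v : vec I) :
  frechet_sub g (zsl I n z 0) v ->
  frechet_sub (fun y => g (zsl I n y 0)) z (fun p => delta_slot p.1 0 * v p.2).
Proof.
move=> [Hx Hg]; split => // eps heps; have [dl [hdl Hdl]] := Hg eps heps.
exists dl; split => // y hy.
have Hn : vnorm (vsub (zsl I n y 0) (zsl I n z 0)) <= vnorm (vsub y z).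
  rewrite /vnorm; apply: sqrt_le_1_alt.
  rewrite /inner -(@rsum_delta_slot _ _ 0 (fun p => vsub y z p * vsub y z p)) //.
  apply: rsum_le => -[p i] /=; have := Rle_0_sqr (vsub y z (p, i)).
  by rewrite /Rsqr /delta_slot; case: (_ == _) => ?; nra.
have -> : inner (fun p => delta_slot p.1 0 * v p.2) (vsub y z) =
          inner v (vsub (zsl I n y 0) (zsl I n z 0)).
  rewrite /inner -(@rsum_delta_slot _ _ 0 (fun p => v p.2 * vsub y z p)) //.
  by apply: eq_rsum => -[p i] /=; ring.
have := Hdl _ (Rle_lt_trans _ _ _ Hn hy).
case: (g (zsl I n z 0)) => [gx|] //=; case: (g _) => [gy|] //=.
by have := vnorm_ge0 (vsub y z); nra.
Qed.

(** * The quadratic tail of the Lyapunov function *)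

Section LyapunovTail.
Variables (I : finType) (n : nat) (kap : R) (w : nat -> R).
Implicit Types (z e y : vec ('I_n.+1 * I)%type).

Definition slot_diff z (h : nat) : vec I := vsub (zsl I n z h) (zsl I n z h.-1).

Definition lyap_tail z : R :=
  kap * foldr Rplus 0 (map (fun h => w h * vnorm (slot_diff z h) ^ 2) (iota 1 n)).

Definition lyap_tail_grad z : vec ('I_n.+1 * I)%type := fun p =>
  kap * \big[Rplus/0]_(h <- iota 1 n)
          (w h * 2 * slot_diff z h p.2 * (delta_slot p.1 h - delta_slot p.1 h.-1)).

Lemma inner_lyap_tail_grad z e :
  inner (lyap_tail_grad z) e =
  kap * \big[Rplus/0]_(h <- iota 1 n) (w h * 2 * inner (slot_diff z h) (slot_diff e h)).
Proof.
rewrite /inner /lyap_tail_grad (@eq_rsum _ _ (fun p => kap * \big[Rplus/0]_(h <- iota 1 n)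
    (delta_slot p.1 h * (w h * 2 * slot_diff z h p.2 * e p)
     - delta_slot p.1 h.-1 * (w h * 2 * slot_diff z h p.2 * e p)))); last first.
  move=> p; rewrite Rmult_assoc big_distrl /=; congr (_ * _).
  by apply: eq_bigr => h _; ring.
rewrite rsumZ rsumE exchange_big /=; congr (_ * _).
rewrite big_seq_cond [in RHS]big_seq_cond; apply: eq_bigr => h.
rewrite andbT mem_iota => hh; rewrite -rsumE rsumB !rsum_delta_slot; try lia.
by rewrite -rsumB -rsumZ; apply: eq_rsum => i; rewrite /slot_diff /zsl /vsub /=; ring.
Qed.

Lemma lyap_tail_convex z y :
  0 <= kap -> (forall h, 0 <= w h) ->
  lyap_tail z + inner (lyap_tail_grad z) (vsub y z) <= lyap_tail y.
Proof.
move=> hk hw; rewrite inner_lyap_tail_grad /lyap_tail !foldr_Rplus_map -Rmult_plus_distr_l.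
apply: Rmult_le_compat_l => //; rewrite -big_split; apply: bigR_le => h _.
have -> : vnorm (slot_diff y h) ^ 2 = vnorm (slot_diff z h) ^ 2
    + 2 * inner (slot_diff z h) (slot_diff (vsub y z) h)
    + inner (slot_diff (vsub y z) h) (slot_diff (vsub y z) h).
  rewrite !vnorm_sqr /inner -!rsumZ -!rsumD; apply: eq_rsum => i.
  by rewrite /slot_diff /zsl /vsub; ring.
by have := hw h; have := inner_ge0 (slot_diff (vsub y z) h); rewrite /=; nra.
Qed.

Lemma Rabs_lyap_tail_grad_le z (p : ('I_n.+1 * I)%type) (W D : R) :
  0 <= kap -> (forall h, 0 <= w h <= W) ->
  (forall h i, (1 <= h <= n)%N -> Rabs (slot_diff z h i) <= D) ->
  Rabs (lyap_tail_grad z p) <= kap * (INR n * (W * 2 * D)).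
Proof.
move=> hk hw hD; rewrite /lyap_tail_grad Rabs_mult Rabs_pos_eq //.
apply: Rmult_le_compat_l => //; rewrite -[in INR n](size_iota 1 n).
apply: Rle_trans (Rabs_bigR_le _ _ _) _; apply: bigR_le_size => h; rewrite mem_iota => hh.
have hd : Rabs (delta_slot p.1 h - delta_slot p.1 h.-1) <= 1.
  by apply: Rabs_le; rewrite /delta_slot; case: (_ == h); case: (_ == h.-1); lra.
have hA := hD h p.2 ltac:(lia); have [hw0 hwW] := hw h.
rewrite !Rabs_mult (Rabs_pos_eq (w h)) // (Rabs_pos_eq 2); last lra.
have hA0 := Rabs_pos (slot_diff z h p.2).
have hx : 0 <= w h * 2 * Rabs (slot_diff z h p.2) by nra.
apply: Rle_trans (Rmult_le_compat_l _ _ _ hx hd) _; rewrite Rmult_1_r; nra.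
Qed.
End LyapunovTail.

Lemma zsl_zk (I : finType) (X : nat -> vec I) (tau k h : nat) (i : I) :
  (h <= tau)%N -> zsl I tau (zk I X tau k) h i = X (k - h)%N i.
Proof. by move=> hh; rewrite /zsl /zk /= inordK. Qed.

Lemma Phi_split m (I : finType) blk f r M rho tau (y : vec ('I_tau.+1 * I)%type) :
  Phi m I blk f r M rho tau y =
  ER_addR (Psi m I blk f r (zsl I tau y 0))
    (lyap_tail (M * sqrt (INR rho) / (2 * sqrt (INR tau))) (fun h => INR (tau - h + 1)) y).
Proof. by rewrite /Phi /Psi /lyap_tail /slot_diff; case: rfull => //= a; f_equal; ring. Qed.

Section BlockSums.
Variables (m : nat) (I : finType) (blk : I -> 'I_m).

Lemma rsum_blocks (g : vec I) :
  \big[Rplus/0]_(j : 'I_m) rsum (fun t : blockT m I blk j => g (val t)) = rsum g.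
Proof.
rewrite rsumE (partition_big blk predT) //=; apply: eq_bigr => j _.
by rewrite rsumE -(big_sub (fun i => blk i == j)).
Qed.

Lemma inner_blocks (u v : vec I) :
  inner u v = \big[Rplus/0]_(j : 'I_m) inner (blk_of m I blk u j) (blk_of m I blk v j).
Proof. by rewrite /inner -rsum_blocks. Qed.

Lemma rfull_Some (r : forall j, vec (blockT m I blk j) -> ER) (x : vec I) (b : 'I_m -> R) :
  (forall j, r j (blk_of m I blk x j) = Some (b j)) ->
  rfull m I blk r x = Some (\big[Rplus/0]_(j : 'I_m) b j).
Proof.
move=> H; rewrite /rfull -big_enum /=.
by elim: (enum 'I_m) => [|a s IH] /=; rewrite ?big_nil ?big_cons ?H ?IH.
Qed.

Lemma rfull_ge (r : forall j, vec (blockT m I blk j) -> ER) (y : vec I) (A : 'I_m -> R) :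
  (forall j, ER_le (Some (A j)) (r j (blk_of m I blk y j))) ->
  ER_le (Some (\big[Rplus/0]_(j : 'I_m) A j)) (rfull m I blk r y).
Proof.
move=> H; rewrite /rfull -big_enum /=.
elim: (enum 'I_m) => [|a s IH] /=; first by rewrite big_nil /=; lra.
rewrite big_cons; have := H a; case: (r a _) => [ra|] //=.
by move: IH; case: (foldr _ _ _) => [q|] //=; lra.
Qed.

Lemma rfull_quadratic_minorant (r : forall j, vec (blockT m I blk j) -> ER) (x s : vec I) (C : R) :
  (forall j, exists b, r j (blk_of m I blk x j) = Some b /\ forall u,
     ER_le (Some (b + inner (blk_of m I blk s j) (vsub u (blk_of m I blk x j))
                  - C * inner (vsub u (blk_of m I blk x j)) (vsub u (blk_of m I blk x j))))
           (r j u)) ->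
  exists rx, rfull m I blk r x = Some rx /\ forall y,
    ER_le (Some (rx + inner s (vsub y x) - C * inner (vsub y x) (vsub y x))) (rfull m I blk r y).
Proof.
move=> H; pose b j := odflt 0 (r j (blk_of m I blk x j)).
have Hb j : r j (blk_of m I blk x j) = Some (b j).
  by have [bj [E _]] := H j; rewrite /b E.
exists (\big[Rplus/0]_(j : 'I_m) b j); split => [|y]; first exact: rfull_Some.
pose xj j := blk_of m I blk x j; pose yj j := blk_of m I blk y j.
have -> : \big[Rplus/0]_(j : 'I_m) b j + inner s (vsub y x) - C * inner (vsub y x) (vsub y x) =
    \big[Rplus/0]_(j : 'I_m) (b j + inner (blk_of m I blk s j) (vsub (yj j) (xj j))
                               - C * inner (vsub (yj j) (xj j)) (vsub (yj j) (xj j))).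
  by rewrite (inner_blocks s) (inner_blocks (vsub y x)) bigRB big_split big_distrr.
apply: rfull_ge => j; have [bj [E Hj]] := H j.
by move: (Hb j); rewrite E => -[<-]; apply: Hj.
Qed.
End BlockSums.

(** * Step lengths and update times *)

Lemma Rabs_sub_le_path (I : finType) (X : nat -> vec I) (i : I) (t n : nat) :
  Rabs (X (t + n)%N i - X t i) <= \big[Rplus/0]_(t <= s < t + n) vnorm (vsub (X s.+1) (X s)).
Proof.
elim: n => [|n IH].
  by rewrite addn0 big_geq // Rminus_diag_eq // Rabs_R0; lra.
rewrite addnS big_nat_recr /= ?leq_addr //.
have : Rabs (X (t + n).+1 i - X (t + n)%N i) <= vnorm (vsub (X (t + n).+1) (X (t + n)%N)) :=
  Rabs_coord_le_vnorm _ i.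
have := Rabs_triang (X (t + n).+1 i - X (t + n)%N i) (X (t + n)%N i - X t i).
have -> : X (t + n).+1 i - X (t + n)%N i + (X (t + n)%N i - X t i) = X (t + n).+1 i - X t i by ring.
lra.
Qed.

Section Steps.
Variables (I : finType) (X : nat -> vec I) (tau K k : nat).

Lemma SsumE : Ssum I X tau K k =
  \big[Rplus/0]_(k - tau - K <= s < k.+1) vnorm (vsub (X s.+1) (X s)).
Proof. by rewrite /Ssum foldr_Rplus_map /index_iota subSn // -subnDA leq_subr. Qed.

Lemma Ssum_ge0 : 0 <= Ssum I X tau K k.
Proof. by rewrite SsumE; apply: bigR_ge0 => s _; apply: vnorm_ge0. Qed.

Lemma Rabs_sub_le_Ssum (t : nat) (i : I) :
  (k - tau - K <= t <= k.+1)%N -> Rabs (X k.+1 i - X t i) <= Ssum I X tau K k.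
Proof.
move=> /andP [h1 h2]; rewrite SsumE (big_cat_nat h1 h2) /=.
have := Rabs_sub_le_path X i t (k.+1 - t); rewrite subnKC //.
have := @bigR_ge0 _ (index_iota (k - tau - K) t) xpredT
  (fun s => vnorm (vsub (X s.+1) (X s))) (fun s _ => vnorm_ge0 _).
lra.
Qed.

Lemma Rabs_sub_le_2Ssum (t t' : nat) (i : I) :
  (k - tau - K <= t <= k.+1)%N -> (k - tau - K <= t' <= k.+1)%N ->
  Rabs (X t i - X t' i) <= 2 * Ssum I X tau K k.
Proof.
move=> /(@Rabs_sub_le_Ssum _ i) h /(@Rabs_sub_le_Ssum _ i) h'.
have -> : X t i - X t' i = (X k.+1 i - X t' i) - (X k.+1 i - X t i) by ring.
by apply: Rle_trans (Rabs_triang _ _) _; rewrite Rabs_Ropp; lra.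
Qed.
End Steps.

(* Last time [<= k] at which [js] selects [j]; [0] if [j] is never selected up to [k]. *)
Fixpoint last_update (m : nat) (js : nat -> 'I_m) (j : 'I_m) (k : nat) : nat :=
  if js k == j then k else if k is k'.+1 then last_update js j k' else 0%N.

Section LastUpdate.
Variables (m : nat) (js : nat -> 'I_m) (j : 'I_m).

Lemma last_update_le k : (last_update js j k <= k)%N.
Proof. by elim: k => [|k IH] /=; case: ifP => // _; apply: leqW. Qed.

Lemma last_update_ge {k t} : (t <= k)%N -> js t = j -> (t <= last_update js j k)%N.
Proof.
elim: k => [|k IH] ht Ht /=; first by case: ifP; lia.
case: ifP => [_|/eqP Hk]; first lia.
have : t != k.+1 by apply/eqP => E; apply: Hk; rewrite -E.
by move=> ?; apply: IH => //; lia.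
Qed.

Lemma last_update_hit {k t} : (t <= k)%N -> js t = j -> js (last_update js j k) = j.
Proof.
elim: k => [|k IH] ht Ht /=; case: ifP => [/eqP //|/eqP Hk].
  by move: ht; rewrite leqn0 => /eqP ht; rewrite ht in Ht.
have : t != k.+1 by apply/eqP => E; apply: Hk; rewrite -E.
by move=> ?; apply: IH Ht; lia.
Qed.

Lemma last_update_after {k t} : (last_update js j k < t <= k)%N -> js t <> j.
Proof.
elim: k t => [|k IH] t /=; case: ifP => [_|/eqP Hk]; try lia.
move=> /andP [h1 h2]; move: h2; rewrite leq_eqVlt => /predU1P [->|] //.
by rewrite ltnS => h2; apply: IH; rewrite h1 h2.
Qed.
End LastUpdate.

(** * Asynchronous PALM *)

Lemma prox_argmin_minorant (T : finType) (rj : vec T -> ER) (g xh xp : vec T) (ga C : R) :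
  0 < ga -> / (2 * ga) <= C -> proper_fun rj ->
  is_argmin (fun u => ER_addR (rj u)
               (inner g (vsub u xh) + / (2 * ga) * vnorm (vsub u xh) ^ 2)) xp ->
  exists b, rj xp = Some b /\ forall u,
    ER_le (Some (b + inner (fun i => - g i - (xp i - xh i) / ga) (vsub u xp)
                 - C * inner (vsub u xp) (vsub u xp))) (rj u).
Proof.
move=> hga hC [u0 hu0] Harg.
have := Harg u0; rewrite /ER_addR.
case: (rj u0) hu0 => [a0|] // _; case Ep: (rj xp) => [b|] // _.
exists b; split => // u; have := Harg u; rewrite /ER_addR Ep.
case: (rj u) => [a|] //; rewrite !vnorm_sqr /= => h.
have := Rmult_le_compat_r _ _ _ (inner_ge0 (vsub u xp)) hC.
suff : inner (fun i => - g i - (xp i - xh i) / ga) (vsub u xp)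
            - / (2 * ga) * inner (vsub u xp) (vsub u xp) =
          (inner g (vsub xp xh) + / (2 * ga) * inner (vsub xp xh) (vsub xp xh)) -
          (inner g (vsub u xh) + / (2 * ga) * inner (vsub u xh) (vsub u xh)) by lra.
rewrite /inner -!rsumZ -!rsumD -!rsumB; apply: eq_rsum => i; rewrite /vsub; field; lra.
Qed.

Section AsyncPALM.
Local Unset Implicit Arguments.
Variables (m : nat) (I : finType) (blk : I -> 'I_m).
Variables (f : vec I -> R) (grad : vec I -> vec I).
Variables (r : forall j : 'I_m, vec (blockT m I blk j) -> ER) (lam_r : R).
Variables (L : forall j : 'I_m, vec (cblockT m I blk j) -> R).
Variables (tau : nat) (d : nat -> 'I_m -> nat) (X : nat -> vec I) (c M : R).
Variables (jseq : nat -> 'I_m) (rho K : nat) (LA B Lg : R).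

Hypothesis Hf : is_C1 f grad.
Hypothesis Hproper : forall j : 'I_m, proper_fun (r j).
Hypothesis Hlam : 0 < lam_r.
Hypothesis HLpos : forall (j : 'I_m) w, 0 < L j w.
Hypothesis Htau : (1 <= tau)%N.
Hypothesis Hd : forall k (j : 'I_m), (d k j <= tau)%N.
Hypothesis Hc : 0 < c.
Hypothesis HM : 0 < M.
Hypothesis Hiter : forall k, palm_step m I blk f grad r L X d jseq c M lam_r rho tau k.
Hypothesis HA1 : assumption_A1 m jseq K.
Hypothesis HLA0 : 0 < LA.
Hypothesis HLA : forall (j : 'I_m) k, L j (blk_rest m I blk (xdel m I blk X d k) j) <= LA.
Hypothesis HB : forall k, vnorm (X k) <= B.
Hypothesis HLg0 : 0 <= Lg.
Hypothesis HLg : forall x y, vnorm x <= INR #|I| * B -> vnorm y <= INR #|I| * B ->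
  vnorm (vsub (grad x) (grad y)) <= Lg * vnorm (vsub x y).

Local Notation gam := (gamma m I blk L X d c M lam_r rho tau).
Local Notation upd j k := (last_update jseq j k).
Local Notation S := (Ssum I X tau K).

Definition inv_step_bound : R := (LA + 2 * M * sqrt (INR rho * INR tau)) / c + / lam_r.

Lemma gamma_pos h j : 0 < gam h j.
Proof.
have := HLpos j (blk_rest m I blk (xdel m I blk X d h) j).
have := sqrt_pos (INR rho * INR tau).
by move=> *; apply: Rmin_pos => //; apply: Rdiv_lt_0_compat; nra.
Qed.

Lemma inv_gamma_le h j : / gam h j <= inv_step_bound.
Proof.
rewrite /gamma /inv_step_bound.
have := HLpos j (blk_rest m I blk (xdel m I blk X d h) j); have := HLA j h.
have := sqrt_pos (INR rho * INR tau); have := Rinv_0_lt_compat _ Hlam.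
set Lh := L j _; set q := sqrt _ => hl hq hLA hL.
have hA : 0 <= (LA + 2 * M * q) / c.
  by apply: Rmult_le_pos; [nra | apply/Rlt_le/Rinv_0_lt_compat].
rewrite /Rmin; case: Rle_dec => _; last lra.
rewrite Rinv_div; suff : (Lh + 2 * M * q) / c <= (LA + 2 * M * q) / c by lra.
by apply: Rmult_le_compat_r; [apply/Rlt_le/Rinv_0_lt_compat | lra].
Qed.

Lemma last_update_window k j : (K <= k)%N ->
  jseq (upd j k) = j /\ (k - K < upd j k <= k)%N.
Proof.
move=> hk; have [t [ht Ht]] := HA1 (k - K)%N j.
have htk : (k - K + t <= k)%N by lia.
split; first exact: (last_update_hit jseq htk Ht).
by have := last_update_ge jseq htk Ht; have := last_update_le jseq j k; lia.
Qed.

Lemma palm_unchanged h k i : (h <= k)%N ->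
  (forall t, (h < t <= k)%N -> jseq t <> blk i) -> X k.+1 i = X h.+1 i.
Proof.
elim: k => [|k IH] hk Hnone; first by have -> : h = 0%N by lia.
case: (ltngtP h k.+1) hk => // [hlt _|-> //].
have [_ ->] := Hiter k.+1; last by apply/eqP => E; apply: (Hnone k.+1); [lia | rewrite E].
by apply: IH => [|t ht]; [lia | apply: Hnone; lia].
Qed.

Lemma X_succ_last_update k i : X k.+1 i = X (upd (blk i) k).+1 i.
Proof.
by apply: palm_unchanged (last_update_le _ _ _) _ => t; apply: last_update_after.
Qed.

Lemma inv_step_bound_ge0 : 0 <= inv_step_bound.
Proof.
have := sqrt_pos (INR rho * INR tau); have := Rinv_0_lt_compat _ Hlam.
have := Rinv_0_lt_compat _ Hc; rewrite /inv_step_bound /Rdiv => hc hl hq.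
by apply: Rplus_le_le_0_compat; [apply: Rmult_le_pos|]; nra.
Qed.

(* On block j, the proximal optimality condition of the last update of j before k+1. *)
Definition palm_slope (k : nat) : vec I := fun i =>
  let h := upd (blk i) k in
  - grad (xdel m I blk X d h) i - (X h.+1 i - X h i) / gam h (blk i).

Lemma blk_of_palm_slope k j :
  blk_of m I blk (palm_slope k) j =
  (fun t => - blk_of m I blk (grad (xdel m I blk X d (upd j k))) j t
            - (blk_of m I blk (X (upd j k).+1) j t - blk_of m I blk (X (upd j k)) j t)
              / gam (upd j k) j).
Proof. by apply: functional_extensionality => t; rewrite /palm_slope /blk_of (eqP (valP t)). Qed.

Lemma blk_of_X_succ k j : blk_of m I blk (X k.+1) j = blk_of m I blk (X (upd j k).+1) j.
Proof.
by apply: functional_extensionality => t; rewrite /blk_of X_succ_last_update (eqP (valP t)).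
Qed.

Lemma block_minorant k j : (K <= k)%N ->
  exists b, r j (blk_of m I blk (X k.+1) j) = Some b /\ forall u,
    let e := vsub u (blk_of m I blk (X k.+1) j) in
    ER_le (Some (b + inner (blk_of m I blk (palm_slope k) j) e - inv_step_bound / 2 * inner e e))
          (r j u).
Proof.
move=> hk; have [hj _] := last_update_window k j hk.
have := Hiter (upd j k); rewrite /palm_step hj => -[Harg _].
rewrite blk_of_palm_slope blk_of_X_succ.
apply: prox_argmin_minorant (gamma_pos _ _) _ (Hproper j) Harg.
by have := inv_gamma_le (upd j k) j; rewrite Rinv_mult; lra.
Qed.

Lemma Psi_frechet k : (K <= k)%N ->
  frechet_sub (Psi m I blk f r) (X k.+1) (fun i => grad (X k.+1) i + palm_slope k i).
Proof.
move=> hk; have [rx [Hrx Hmin]] :=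
  rfull_quadratic_minorant _ _ _ _ (fun j => block_minorant k j hk).
apply: frechet_add_C1 Hf _; apply: frechet_of_quadratic_minorant Hrx Hmin.
by have := inv_step_bound_ge0; lra.
Qed.

(* E.g. x^{k-d_k}: this puts it in the ball on which grad f is Lipschitz. *)
Lemma vnorm_le_of_iterates (u : vec I) :
  (forall i, exists t, u i = X t i) -> vnorm u <= INR #|I| * B.
Proof.
move=> Hu; apply: vnorm_le_card => i; have [t ->] := Hu i.
exact: Rle_trans (Rabs_coord_le_vnorm _ i) (HB t).
Qed.

Lemma grad_gap_le k h : (k - K < h <= k)%N ->
  vnorm (vsub (grad (X k.+1)) (grad (xdel m I blk X d h))) <= Lg * (INR #|I| * S k).
Proof.
move=> hh; apply: Rle_trans (HLg _ _ _ _) _.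
- by apply: vnorm_le_of_iterates => i; exists k.+1.
- by apply: vnorm_le_of_iterates => i; exists (h - d h (blk i))%N.
apply: Rmult_le_compat_l HLg0 _; apply: vnorm_le_card => i.
by apply: Rabs_sub_le_Ssum; have := Hd h (blk i); lia.
Qed.

Definition subgrad_const : R := Lg * INR #|I| + 2 * inv_step_bound.

Lemma Rabs_Psi_subgrad_le k i : (K <= k)%N ->
  Rabs (grad (X k.+1) i + palm_slope k i) <= subgrad_const * S k.
Proof.
move=> hk; have [_ hw] := last_update_window k (blk i) hk.
rewrite /palm_slope /subgrad_const; set h := upd (blk i) k.
have e1 : Rabs (grad (X k.+1) i - grad (xdel m I blk X d h) i) <= Lg * (INR #|I| * S k).
  exact: Rle_trans (Rabs_coord_le_vnorm (vsub _ _) i) (grad_gap_le k h hw).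
have e2 : Rabs (X h.+1 i - X h i) <= 2 * S k by apply: Rabs_sub_le_2Ssum; lia.
have := inv_gamma_le h (blk i); have := Rinv_0_lt_compat _ (gamma_pos h (blk i)).
move=> hq0 hq.
have -> : grad (X k.+1) i + (- grad (xdel m I blk X d h) i - (X h.+1 i - X h i) / gam h (blk i))
        = (grad (X k.+1) i - grad (xdel m I blk X d h) i)
          + - ((X h.+1 i - X h i) * / gam h (blk i)) by rewrite /Rdiv; ring.
apply: Rle_trans (Rabs_triang _ _) _; rewrite Rabs_Ropp Rabs_mult (Rabs_pos_eq (/ _)); last lra.
have := Rabs_pos (X h.+1 i - X h i); have := @Ssum_ge0 I X tau K k; nra.
Qed.

Definition lyap_kap : R := M * sqrt (INR rho) / (2 * sqrt (INR tau)).
Definition lyap_weight (h : nat) : R := INR (tau - h + 1).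

Lemma lyap_kap_ge0 : 0 <= lyap_kap.
Proof.
have htau : 0 < sqrt (INR tau) by apply/sqrt_lt_R0/lt_0_INR/ltP.
apply: Rmult_le_pos; first by have := sqrt_pos (INR rho); nra.
by apply/Rlt_le/Rinv_0_lt_compat; lra.
Qed.

Lemma zsl_zk0 k : zsl I tau (zk I X tau k) 0 = X k.
Proof. by apply: functional_extensionality => i; rewrite zsl_zk // subn0. Qed.

Lemma Phi_frechet k : (K <= k)%N ->
  frechet_sub (Phi m I blk f r M rho tau) (zk I X tau k.+1)
    (fun p => delta_slot p.1 0 * (grad (X k.+1) p.2 + palm_slope k p.2)
              + lyap_tail_grad lyap_kap lyap_weight (zk I X tau k.+1) p).
Proof.
move=> hk; have -> : Phi m I blk f r M rho tau = fun y =>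
    ER_addR (Psi m I blk f r (zsl I tau y 0)) (lyap_tail lyap_kap lyap_weight y).
  by apply: functional_extensionality => y; rewrite Phi_split.
apply: frechet_add_affine_minorant => [|y].
  apply: (frechet_slice0 (v := fun i => grad (X k.+1) i + palm_slope k i)).
  by rewrite zsl_zk0; apply: Psi_frechet.
by apply: lyap_tail_convex => [|h]; [apply: lyap_kap_ge0 | apply: pos_INR].
Qed.

Definition lyap_grad_const : R := lyap_kap * (INR tau * (INR tau.+1 * 2 * 2)).

Lemma Rabs_lyap_grad_le k p : (K <= k)%N ->
  Rabs (lyap_tail_grad lyap_kap lyap_weight (zk I X tau k.+1) p) <= lyap_grad_const * S k.
Proof.
move=> hk; apply: Rle_trans (@Rabs_lyap_tail_grad_le _ _ _ _ _ _ (INR tau.+1) (2 * S k) _ _ _) _.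
- exact: lyap_kap_ge0.
- by move=> h; split; [apply: pos_INR | apply: le_INR; lia].
- by move=> h i hh; rewrite /slot_diff /vsub !zsl_zk; [apply: Rabs_sub_le_2Ssum | |]; lia.
- by rewrite /lyap_grad_const; right; ring.
Qed.

Lemma subgrad_const_ge0 : 0 <= subgrad_const.
Proof. by have := inv_step_bound_ge0; have := pos_INR #|I|; rewrite /subgrad_const; nra. Qed.

Lemma lyap_grad_const_ge0 : 0 <= lyap_grad_const.
Proof.
have := lyap_kap_ge0; have := pos_INR tau; have := pos_INR tau.+1.
by rewrite /lyap_grad_const => *; apply: Rmult_le_pos => //; nra.
Qed.

Lemma vnorm_Psi_subgrad_le k : (K <= k)%N ->
  vnorm (fun i => grad (X k.+1) i + palm_slope k i) <= INR #|I| * subgrad_const * S k.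
Proof.
move=> hk; rewrite Rmult_assoc; apply: vnorm_le_card => i.
exact: Rabs_Psi_subgrad_le.
Qed.

Lemma vnorm_Phi_subgrad_le k : (K <= k)%N ->
  vnorm (fun p : ('I_tau.+1 * I)%type =>
           delta_slot p.1 0 * (grad (X k.+1) p.2 + palm_slope k p.2)
           + lyap_tail_grad lyap_kap lyap_weight (zk I X tau k.+1) p)
    <= INR (tau.+1 * #|I|) * (subgrad_const + lyap_grad_const) * S k.
Proof.
move=> hk; rewrite -[in INR (tau.+1 * _)%N](card_ord tau.+1) -card_prod Rmult_assoc.
apply: vnorm_le_card => p.
apply: Rle_trans (Rabs_triang _ _) _.
rewrite Rmult_plus_distr_r; apply: Rplus_le_compat; last exact: Rabs_lyap_grad_le.
have hdelta : Rabs (delta_slot p.1 0) <= 1.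
  by rewrite /delta_slot; case: (_ == _); rewrite ?Rabs_R1 ?Rabs_R0; lra.
rewrite Rabs_mult -[X in _ <= X]Rmult_1_l.
exact: Rmult_le_compat (Rabs_pos _) (Rabs_pos _) hdelta (Rabs_Psi_subgrad_le k p.2 hk).
Qed.

Lemma palm_subgradient_bounds :
  exists c0 : R, 0 < c0 /\ exists k' : nat, forall k : nat, (k' <= k)%N ->
    dist0_le (limiting_sub (Phi m I blk f r M rho tau) (zk I X tau k.+1)) (c0 * S k) /\
    dist0_le (limiting_sub (Psi m I blk f r) (X k.+1)) (c0 * S k).
Proof.
pose c1 := INR #|I| * subgrad_const.
pose c2 := INR (tau.+1 * #|I|) * (subgrad_const + lyap_grad_const).
have hc1 : 0 <= c1 by apply: Rmult_le_pos; [apply: pos_INR | apply: subgrad_const_ge0].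
have hc2 : 0 <= c2.
  apply: Rmult_le_pos; first exact: pos_INR.
  by have := subgrad_const_ge0; have := lyap_grad_const_ge0; lra.
exists (c1 + c2 + 1); split; first lra.
exists K => k hk; have hS := @Ssum_ge0 I X tau K k.
split; apply: dist0_le_of (frechet_limiting _) _.
- exact: Phi_frechet.
- by apply: Rle_trans (vnorm_Phi_subgrad_le k hk) _; rewrite -/c2; nra.
- exact: Psi_frechet.
- by apply: Rle_trans (vnorm_Psi_subgrad_le k hk) _; rewrite -/c1; nra.
Qed.
End AsyncPALM.

Theorem mainTheorem7
  (m : nat) (I : finType) (blk : I -> 'I_m)
  (f : vec I -> R) (grad : vec I -> vec I)
  (r : forall j : 'I_m, vec (blockT m I blk j) -> ER)
  (lam_r : R)
  (L : forall j : 'I_m, vec (cblockT m I blk j) -> R)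
  (tau : nat) (d : nat -> 'I_m -> nat)
  (X : nat -> vec I) (c M : R) (jseq : nat -> 'I_m) (rho K : nat)
  (Hf : is_C1 f grad)
  (Hr : forall j : 'I_m, proper_fun (r j) /\ lsc (r j))
  (Hbelow : exists b : R, forall x : vec I, ER_le (Some b) (Psi m I blk f r x))
  (Hlam : 0 < lam_r)
  (Hprox : prox_bounded (rfull m I blk r) lam_r)
  (HLpos : forall (j : 'I_m) (w : vec (cblockT m I blk j)), 0 < L j w)
  (HLip : block_lipschitz m I blk grad L)
  (HgradLip : lip_on_bounded grad)
  (Htau : (1 <= tau)%N)
  (Hd : forall (k : nat) (j : 'I_m), (d k j <= tau)%N)
  (Hc : 0 < c < 1) (HM : 0 < M)
  (Hrho : is_rho m jseq tau rho)
  (Hiter : forall k : nat, palm_step m I blk f grad r L X d jseq c M lam_r rho tau k)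
  (HA1 : assumption_A1 m jseq K)
  (HA2 : exists Lb : R, 0 < Lb /\
     forall (j : 'I_m) (k : nat), L j (blk_rest m I blk (xdel m I blk X d k) j) <= Lb)
  (HA3 : forall k : nat,
     vnorm (vsub (blk_of m I blk (grad (X k)) (jseq k))
                 (blk_of m I blk (grad (xdel m I blk X d k)) (jseq k)))
       <= M * vnorm (vsub (X k) (xdel m I blk X d k)))
  (Hbdd : exists B : R, forall k : nat, vnorm (X k) <= B) :
  exists c0 : R, 0 < c0 /\ exists k' : nat, forall k : nat, (k' <= k)%N ->
    dist0_le (limiting_sub (Phi m I blk f r M rho tau) (zk I X tau k.+1))
             (c0 * Ssum I X tau K k) /\
    dist0_le (limiting_sub (Psi m I blk f r) (X k.+1))
             (c0 * Ssum I X tau K k).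
Proof.
have [B HB] := Hbdd.
have [LA [hLA HLA]] := HA2.
have [Lg HLg] := HgradLip (INR #|I| * B).
have HLg' x y : vnorm x <= INR #|I| * B -> vnorm y <= INR #|I| * B ->
    vnorm (vsub (grad x) (grad y)) <= Rabs Lg * vnorm (vsub x y).
  move=> hx hy; apply: Rle_trans (HLg x y hx hy) _.
  exact/Rmult_le_compat_r/Rle_abs/vnorm_ge0.
exact: (palm_subgradient_bounds m I blk f grad r lam_r L tau d X c M jseq rho K LA B (Rabs Lg)
  Hf (fun j => (Hr j).1) Hlam HLpos Htau Hd (proj1 Hc) HM Hiter HA1 hLA HLA HB (Rabs_pos Lg) HLg').
Qed.
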